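(* Let $\mathbf{X}$ be a real or complex Banach space and let $\mathcal{A}(\mathbf{X})$ be a unital standard operator algebra on $\mathbf{X}$. If $\phi:\mathcal{A}(\mathbf{X})\to\mathcal{A}(\mathbf{X})$ is a linear mapping such that $\phi(A)\circ B+A\circ\phi(B)=0$ for all $A,B\in\mathcal{A}(\mathbf{X})$ with $AB=BA=0$, then there exist a derivation $\delta$ and a multiplier $\eta$ on $\mathcal{A}(\mathbf{X})$ such that $\phi=\delta+\eta$. If moreover $\phi(I)=0$, then $\phi$ is a derivation.
   Context: $\mathcal{B}(\mathbf{X})$ is the algebra of bounded linear operators on $\mathbf{X}$ and $\mathcal{F}(\mathbf{X})$ the ideal of finite rank operators. A subalgebra $\mathcal{A}(\mathbf{X})\subseteq\mathcal{B}(\mathbf{X})$ is standard if $\mathcal{F}(\mathbf{X})\subseteq\mathcal{A}(\mathbf{X})$; unital means it contains the identity $I$. $X\circ Y=XY+YX$. A linear $\delta$ is a derivation if $\delta(XY)=\delta(X)Y+X\delta(Y)$; a linear $\eta$ is a multiplier if $\eta(X)=\eta(I)X=X\eta(I)$ for all $X$. *)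

From Stdlib Require Import Reals List.
Open Scope R_scope.
Set Implicit Arguments.

Record ScalarField := {
  sc :> Type;
  szero : sc; sone : sc;
  sadd : sc -> sc -> sc; smul : sc -> sc -> sc; sopp : sc -> sc;
  sabs : sc -> R }.

Definition RField : ScalarField :=
  {| sc := R; szero := 0; sone := 1; sadd := Rplus; smul := Rmult;
     sopp := Ropp; sabs := Rabs |}.

(* The complex numbers a + b i, represented as pairs (a, b). *)
Definition Cpx := (R * R)%type.
Definition Cadd (z w : Cpx) : Cpx := (fst z + fst w, snd z + snd w).
Definition Cmul (z w : Cpx) : Cpx :=
  (fst z * fst w - snd z * snd w, fst z * snd w + snd z * fst w).
Definition Copp (z : Cpx) : Cpx := (- fst z, - snd z).
Definition Cabs (z : Cpx) : R := sqrt (fst z * fst z + snd z * snd z).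

Definition CField : ScalarField :=
  {| sc := Cpx; szero := (0, 0); sone := (1, 0); sadd := Cadd; smul := Cmul;
     sopp := Copp; sabs := Cabs |}.

Record BanachSpace (K : ScalarField) := {
  vec :> Type;
  vzero : vec;
  vadd : vec -> vec -> vec;
  vopp : vec -> vec;
  vscale : K -> vec -> vec;
  vnorm : vec -> R;
  vadd_assoc : forall x y z, vadd x (vadd y z) = vadd (vadd x y) z;
  vadd_comm : forall x y, vadd x y = vadd y x;
  vadd_0 : forall x, vadd vzero x = x;
  vadd_opp : forall x, vadd x (vopp x) = vzero;
  vscale_1 : forall x, vscale (sone K) x = x;
  vscale_assoc : forall a b x, vscale a (vscale b x) = vscale (smul K a b) x;
  vscale_addv : forall a x y, vscale a (vadd x y) = vadd (vscale a x) (vscale a y);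
  vscale_adds : forall a b x, vscale (sadd K a b) x = vadd (vscale a x) (vscale b x);
  vnorm_eq0 : forall x, vnorm x = 0 <-> x = vzero;
  vnorm_triangle : forall x y, vnorm (vadd x y) <= vnorm x + vnorm y;
  vnorm_scale : forall a x, vnorm (vscale a x) = sabs K a * vnorm x;
  vcomplete : forall u : nat -> vec,
    (forall eps, 0 < eps -> exists N, forall m n, (N <= m)%nat -> (N <= n)%nat ->
        vnorm (vadd (u m) (vopp (u n))) < eps) ->
    exists l, forall eps, 0 < eps -> exists N, forall n, (N <= n)%nat ->
        vnorm (vadd (u n) (vopp l)) < eps }.

Arguments vzero {K} _.
Arguments vadd {K} {_}.
Arguments vopp {K} {_}.
Arguments vscale {K} {_}.
Arguments vnorm {K} {_}.

Section Ops.
Variables (K : ScalarField) (X : BanachSpace K).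

Definition op := X -> X.
Definition op_zero : op := fun _ => vzero X.
Definition op_id : op := fun x => x.
Definition op_add (S T : op) : op := fun x => vadd (S x) (T x).
Definition op_scale (a : K) (T : op) : op := fun x => vscale a (T x).
Definition op_mul (S T : op) : op := fun x => S (T x).
Definition jordan (S T : op) : op := op_add (op_mul S T) (op_mul T S).

Definition is_linear (T : op) : Prop :=
  (forall x y, T (vadd x y) = vadd (T x) (T y)) /\
  (forall a x, T (vscale a x) = vscale a (T x)).

Definition bounded_op (T : op) : Prop :=
  is_linear T /\ exists M, forall x, vnorm (T x) <= M * vnorm x.

Fixpoint lin_comb (cs : list K) (ys : list X) : X :=
  match cs, ys with
  | c :: cs', y :: ys' => vadd (vscale c y) (lin_comb cs' ys')
  | _, _ => vzero X
  end.

Definition finite_rank_op (T : op) : Prop :=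
  bounded_op T /\
  exists ys : list X, forall x, exists cs : list K,
      length cs = length ys /\ T x = lin_comb cs ys.

Definition unital_standard_algebra (A : op -> Prop) : Prop :=
  (forall T, A T -> bounded_op T) /\
  A op_zero /\
  (forall S T, A S -> A T -> A (op_add S T)) /\
  (forall a T, A T -> A (op_scale a T)) /\
  (forall S T, A S -> A T -> A (op_mul S T)) /\
  (forall T, finite_rank_op T -> A T) /\
  A op_id.

Definition maps_into (A : op -> Prop) (f : op -> op) : Prop :=
  forall T, A T -> A (f T).

Definition linear_on (A : op -> Prop) (f : op -> op) : Prop :=
  maps_into A f /\
  (forall S T, A S -> A T -> f (op_add S T) = op_add (f S) (f T)) /\
  (forall a T, A T -> f (op_scale a T) = op_scale a (f T)).

Definition derivation_on (A : op -> Prop) (d : op -> op) : Prop :=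
  linear_on A d /\
  forall S T, A S -> A T ->
    d (op_mul S T) = op_add (op_mul (d S) T) (op_mul S (d T)).

Definition multiplier_on (A : op -> Prop) (e : op -> op) : Prop :=
  linear_on A e /\
  forall T, A T -> e T = op_mul (e op_id) T /\ e T = op_mul T (e op_id).

End Ops.

(* By Hahn–Banach there is a bounded functional f and a vector z with f z = 1,
   so A contains every rank-one operator y ⊗ f.  Testing the hypothesis on the
   orthogonal pairs P, I - P with P = v ⊗ f, f v = 1, shows that φ(I) maps
   every such v into its own line, hence φ(I) = λ I.  The map ψ = φ - λ id
   satisfies the same hypothesis and ψ(I) = 0, and the pair E, I - E gives
   ψ(E) = ψ(E) E + E ψ(E) for every idempotent E of A.  Polarizing this identity
   over sums of rank-one idempotents and using the Peirce decomposition of T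
   with respect to v ⊗ f yields ψ(T (y ⊗ f)) = ψ(T) (y ⊗ f) + T ψ(y ⊗ f);
   comparing ψ(S T (y ⊗ f)) z computed in two ways gives ψ(S T) = ψ(S) T + S ψ(T). *)

From Stdlib Require Import Reals List.
From Stdlib Require Import Ring Field Lra Psatz FunctionalExtensionality ClassicalEpsilon Classical.
From mathcomp Require classical_sets boolp.

Set Implicit Arguments.
Unset Strict Implicit.
Open Scope R_scope.

Record field_laws (K : ScalarField) : Prop := {
  sring : ring_theory (szero K) (sone K) (sadd K) (smul K)
            (fun a b => sadd K a (sopp K b)) (sopp K) (@eq (sc K));
  sinv_exists : forall a : K, a <> szero K -> exists b, smul K b a = sone K;
  stwo_neq0 : sadd K (sone K) (sone K) <> szero K;
  sabs_opp1 : sabs K (sopp K (sone K)) = 1 }.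

Lemma field_laws_R : field_laws RField.
Proof.
  constructor; simpl.
  - constructor; intros; simpl; ring.
  - intros a Ha; exists (/ a); field; auto.
  - lra.
  - rewrite Rabs_Ropp, Rabs_R1; auto.
Qed.

Lemma field_laws_C : field_laws CField.
Proof.
  constructor; simpl.
  - constructor; intros; unfold Cadd, Cmul, Copp;
      repeat match goal with p : Cpx |- _ => destruct p end; simpl;
      apply (f_equal2 pair); ring.
  - intros [a b] H.
    assert (Hn : a * a + b * b <> 0).
    { intro E. apply H. assert (a = 0) by nra. assert (b = 0) by nra. subst; auto. }
    exists (a / (a*a+b*b), - b / (a*a+b*b)); unfold Cmul; simpl; apply (f_equal2 pair); field; auto.
  - unfold Cadd; simpl. intro E. inversion E. lra.
  - unfold Cabs, Copp; simpl. replace (_ + _) with 1 by ring. apply sqrt_1.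
Qed.

Lemma field_laws_RC (K : ScalarField) : K = RField \/ K = CField -> field_laws K.
Proof. intros [-> | ->]; [exact field_laws_R | exact field_laws_C]. Qed.

(* Identities in a vector space are proved by [ring] in the commutative ring
   K x X of dual numbers, (a, x) (b, y) = (a b, a y + b x), into which X embeds
   additively. *)
Section DualNumbers.
Variable K : ScalarField.
Hypothesis HK : field_laws K.
Context {X : BanachSpace K}.

Add Ring Kring : (sring HK).

Lemma vadd_0r (x : X) : vadd x (vzero X) = x.
Proof. rewrite vadd_comm; apply vadd_0. Qed.

Lemma vadd_reg_l (a x y : X) : vadd a x = vadd a y -> x = y.
Proof.
  intro H. rewrite <- (vadd_0 X x), <- (vadd_0 X y).
  rewrite <- (vadd_opp X a), (vadd_comm X a).
  rewrite <- !vadd_assoc, H; auto.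
Qed.

Lemma vscale_0l (x : X) : vscale (szero K) x = vzero X.
Proof.
  apply (vadd_reg_l (a := vscale (szero K) x)). rewrite vadd_0r, <- vscale_adds.
  f_equal; ring.
Qed.

Lemma vscale_0r (a : K) : vscale a (vzero X) = vzero X.
Proof. rewrite <- (vscale_0l (vzero X)), vscale_assoc. f_equal; ring. Qed.

Lemma vopp_scaleN1 (x : X) : vopp x = vscale (sopp K (sone K)) x.
Proof.
  apply (vadd_reg_l (a := x)). rewrite vadd_opp. rewrite <- (vscale_1 X x) at 1.
  rewrite <- vscale_adds, <- (vscale_0l x). f_equal; ring.
Qed.

Lemma vadd_ACA (a b c d : X) : vadd (vadd a b) (vadd c d) = vadd (vadd a c) (vadd b d).
Proof.
  rewrite <- !vadd_assoc. f_equal. rewrite !vadd_assoc. f_equal. apply vadd_comm.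
Qed.

Definition dual := (sc K * vec X)%type.
Definition dual0 : dual := (szero K, vzero X).
Definition dual1 : dual := (sone K, vzero X).
Definition dual_add (p q : dual) : dual := (sadd K (fst p) (fst q), vadd (snd p) (snd q)).
Definition dual_mul (p q : dual) : dual :=
  (smul K (fst p) (fst q), vadd (vscale (fst p) (snd q)) (vscale (fst q) (snd p))).
Definition dual_opp (p : dual) : dual := (sopp K (fst p), vopp (snd p)).
Definition dual_sub (p q : dual) : dual := dual_add p (dual_opp q).

Lemma dual_ring : ring_theory dual0 dual1 dual_add dual_mul dual_sub dual_opp (@eq dual).
Proof.
  constructor; intros; unfold dual0, dual1, dual_add, dual_mul, dual_sub, dual_opp;
    repeat match goal with p : dual |- _ => destruct p end; simpl; apply (f_equal2 pair);
    try ring;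
    repeat rewrite ?vopp_scaleN1, ?vscale_addv, ?vscale_assoc, ?vscale_0l, ?vscale_0r,
      ?vadd_0, ?vadd_0r, ?vscale_1.
  - auto.
  - apply vadd_comm.
  - apply vadd_assoc.
  - auto.
  - apply vadd_comm.
  - rewrite <- vadd_assoc. f_equal; f_equal; f_equal; ring.
  - rewrite vscale_adds. apply vadd_ACA.
  - simpl; ring.
  - simpl; auto.
  - rewrite <- vopp_scaleN1; apply vadd_opp.
Qed.

Add Ring Dring : dual_ring.

Definition dual_vec (x : X) : dual := (szero K, x).
Definition dual_scalar (a : K) : dual := (a, vzero X).

Lemma dual_vec_inj x y : dual_vec x = dual_vec y -> x = y.
Proof. intro H; inversion H; auto. Qed.
Lemma dual_vec_add x y : dual_vec (vadd x y) = dual_add (dual_vec x) (dual_vec y).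
Proof. unfold dual_vec, dual_add; simpl; apply (f_equal2 pair); auto; ring. Qed.
Lemma dual_vec_scale a x : dual_vec (vscale a x) = dual_mul (dual_scalar a) (dual_vec x).
Proof.
  unfold dual_vec, dual_mul, dual_scalar; simpl; apply (f_equal2 pair); [ring|].
  rewrite vscale_0l, vadd_0r; auto.
Qed.
Lemma dual_vec_opp x : dual_vec (vopp x) = dual_opp (dual_vec x).
Proof. unfold dual_vec, dual_opp; simpl; apply (f_equal2 pair); auto; ring. Qed.
Lemma dual_vec_zero : dual_vec (vzero X) = dual0.
Proof. auto. Qed.
Lemma dual_scalar_add a b : dual_scalar (sadd K a b) = dual_add (dual_scalar a) (dual_scalar b).
Proof. unfold dual_scalar, dual_add; simpl; rewrite vadd_0; auto. Qed.
Lemma dual_scalar_mul a b : dual_scalar (smul K a b) = dual_mul (dual_scalar a) (dual_scalar b).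
Proof. unfold dual_scalar, dual_mul; simpl; rewrite !vscale_0r, vadd_0; auto. Qed.
Lemma dual_scalar_opp a : dual_scalar (sopp K a) = dual_opp (dual_scalar a).
Proof. unfold dual_scalar, dual_opp; simpl. rewrite vopp_scaleN1, vscale_0r; auto. Qed.
Lemma dual_scalar_one : dual_scalar (sone K) = dual1.
Proof. auto. Qed.
Lemma dual_scalar_zero : dual_scalar (szero K) = dual0.
Proof. auto. Qed.

End DualNumbers.

Ltac vring :=
  apply dual_vec_inj;
  repeat rewrite ?dual_vec_add, ?dual_vec_scale, ?dual_vec_opp, ?dual_vec_zero,
    ?dual_scalar_add, ?dual_scalar_mul, ?dual_scalar_opp, ?dual_scalar_one, ?dual_scalar_zero;
  try (first [assumption | exact field_laws_R]); ring.

Section VectorFacts.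
Variable K : ScalarField.
Hypothesis HK : field_laws K.
Context {X : BanachSpace K}.
Add Ring Kring : (sring HK).
Add Ring Dring : (@dual_ring K HK X).

Lemma vadd_self_eq0 (s : X) : vadd s s = vzero X -> s = vzero X.
Proof.
  intro H. destruct (sinv_exists HK (stwo_neq0 HK)) as [b Hb].
  replace s with (vscale b (vadd s s)).
  - rewrite H; apply vscale_0r; auto.
  - replace (vadd s s) with (vscale (sadd K (sone K) (sone K)) s) by vring.
    rewrite vscale_assoc, Hb, vscale_1; auto.
Qed.

Lemma sadd_self_eq0 (a : K) : sadd K a a = szero K -> a = szero K.
Proof.
  intro H. destruct (sinv_exists HK (stwo_neq0 HK)) as [b Hb].
  transitivity (smul K b (sadd K a a)).
  - transitivity (smul K (smul K b (sadd K (sone K) (sone K))) a); [rewrite Hb; ring | ring].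
  - rewrite H; ring.
Qed.

Lemma vsub_eq0 (u v : X) : vadd u (vopp v) = vzero X -> u = v.
Proof.
  intro H. replace u with (vadd (vadd u (vopp v)) v) by vring. rewrite H. vring.
Qed.

Lemma eq_by_vsub (c : K) (l r g h : X) : l = r ->
  vadd g (vopp h) = vscale c (vadd l (vopp r)) -> g = h.
Proof. intros H1 H2. apply vsub_eq0. rewrite H2, H1. vring. Qed.

Lemma vscale_eq0 (a : K) (y : X) : vscale a y = vzero X -> y <> vzero X -> a = szero K.
Proof.
  intros H Hy. destruct (classic (a = szero K)) as [|Ha]; auto.
  destruct (sinv_exists HK Ha) as [b Hb]. exfalso; apply Hy.
  rewrite <- (vscale_1 X y), <- Hb, <- vscale_assoc, H. apply vscale_0r; auto.
Qed.

Lemma vnorm_ge0 (x : X) : 0 <= vnorm x.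
Proof.
  assert (H := vnorm_triangle X x (vopp x)).
  rewrite vadd_opp, vopp_scaleN1, vnorm_scale, (sabs_opp1 HK) in H; auto.
  assert (vnorm (vzero X) = 0%R) by (apply vnorm_eq0; auto). lra.
Qed.

Lemma linear_add (T : op X) : is_linear T -> forall x y, T (vadd x y) = vadd (T x) (T y).
Proof. intro H; apply (proj1 H). Qed.
Lemma linear_scale (T : op X) : is_linear T -> forall a x, T (vscale a x) = vscale a (T x).
Proof. intro H; apply (proj2 H). Qed.
Lemma linear_zero (T : op X) : is_linear T -> T (vzero X) = vzero X.
Proof.
  intro H. rewrite <- (vscale_0l HK (vzero X)), (linear_scale H), !(vscale_0l HK); auto.
Qed.

End VectorFacts.

Definition zero_jordan_preserving (K : ScalarField) (X : BanachSpace K)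
    (A : op X -> Prop) (psi : op X -> op X) : Prop :=
  forall S T, A S -> A T ->
    op_mul S T = op_zero X -> op_mul T S = op_zero X ->
    op_add (jordan (psi S) T) (jordan S (psi T)) = op_zero X.

Section StandardAlgebra.
Variable K : ScalarField.
Hypothesis HK : field_laws K.
Context {X : BanachSpace K}.
Add Ring Kring : (sring HK).
Add Ring Dring : (@dual_ring K HK X).

Local Notation "0" := (szero K).
Local Notation "1" := (sone K).

Definition bounded_functional (h : X -> K) : Prop :=
  (forall x y, h (vadd x y) = sadd K (h x) (h y)) /\
  (forall a x, h (vscale a x) = smul K a (h x)) /\
  exists M, forall x, sabs K (h x) <= M * vnorm x.

Lemma bf_add h : bounded_functional h -> forall x y, h (vadd x y) = sadd K (h x) (h y).
Proof. intro H; apply H. Qed.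
Lemma bf_scale h : bounded_functional h -> forall a x, h (vscale a x) = smul K a (h x).
Proof. intro H; apply H. Qed.
Lemma bf_zero h : bounded_functional h -> h (vzero X) = 0.
Proof. intro H. rewrite <- (vscale_0l HK (vzero X)), (bf_scale H). ring. Qed.

Lemma bf_one_nonzero h v : bounded_functional h -> h v = 1 -> v <> vzero X.
Proof.
  intros H Hv E. subst v. rewrite (bf_zero H) in Hv.
  apply (stwo_neq0 HK). rewrite <- Hv. ring.
Qed.

Definition rank1 (y : X) (h : X -> K) : op X := fun w => vscale (h w) y.

Lemma rank1_finite_rank y h : bounded_functional h -> finite_rank_op (rank1 y h).
Proof.
  intros [Ha [Hs [M HM]]]. split; [split; [split|]|].
  - intros a b; unfold rank1; rewrite Ha, vscale_adds; auto.
  - intros a b; unfold rank1; rewrite Hs, vscale_assoc; auto.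
  - exists (M * vnorm y)%R. intro x; unfold rank1. rewrite vnorm_scale.
    assert (H1 := HM x). assert (H2 := vnorm_ge0 HK y).
    apply Rle_trans with (M * vnorm x * vnorm y)%R.
    + apply Rmult_le_compat_r; auto.
    + lra.
  - exists (y :: nil). intro x. exists (h x :: nil). split; auto.
    simpl. unfold rank1. rewrite vadd_0r; auto.
Qed.

Lemma rank1_idem u h : bounded_functional h -> h u = 1 ->
  forall w, rank1 u h (rank1 u h w) = rank1 u h w.
Proof. intros [Ha [Hs _]] Hu w. unfold rank1. rewrite Hs, Hu. f_equal; ring. Qed.

Lemma rank1_0l h : rank1 (vzero X) h = op_zero X.
Proof. extensionality u; unfold rank1, op_zero. apply vscale_0r; auto. Qed.

Variable A : op X -> Prop.
Hypothesis HA : unital_standard_algebra A.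

Lemma alg_linear T : A T -> is_linear T.
Proof. intro H. apply (proj1 ((proj1 HA) T H)). Qed.
Lemma alg_zero : A (op_zero X).
Proof. destruct HA as (?&?&?&?&?&?&?); auto. Qed.
Lemma alg_add S T : A S -> A T -> A (op_add S T).
Proof. destruct HA as (?&?&?&?&?&?&?); auto. Qed.
Lemma alg_scale a T : A T -> A (op_scale a T).
Proof. destruct HA as (?&?&?&?&?&?&?); auto. Qed.
Lemma alg_mul S T : A S -> A T -> A (op_mul S T).
Proof. destruct HA as (?&?&?&?&?&?&?); auto. Qed.
Lemma alg_id : A (op_id X).
Proof. destruct HA as (?&?&?&?&?&?&?); auto. Qed.
Lemma alg_rank1 y h : bounded_functional h -> A (rank1 y h).
Proof. intro H. destruct HA as (?&?&?&?&?&Hfin&?). apply Hfin, rank1_finite_rank; auto. Qed.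

Lemma bounded_functional_comp h T :
  bounded_functional h -> A T -> bounded_functional (fun w => h (T w)).
Proof.
  intros [Ha [Hs [M HM]]] HT. destruct (proj1 HA T HT) as [HL [N HN]].
  split; [|split].
  - intros; rewrite (linear_add HL); auto.
  - intros; rewrite (linear_scale HL); auto.
  - exists (Rabs M * Rabs N)%R. intro x.
    apply Rle_trans with (M * vnorm (T x))%R; auto.
    assert (H1 := HN x). assert (0 <= vnorm (T x))%R by apply (vnorm_ge0 HK).
    assert (0 <= vnorm x)%R by apply (vnorm_ge0 HK).
    apply Rle_trans with (Rabs M * vnorm (T x))%R.
    + apply Rmult_le_compat_r; auto. apply Rle_abs.
    + rewrite Rmult_assoc. apply Rmult_le_compat_l. apply Rabs_pos.
      apply Rle_trans with (N * vnorm x)%R; auto.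
      apply Rmult_le_compat_r; auto. apply Rle_abs.
Qed.

Lemma linear_on_add psi : linear_on A psi ->
  forall S T w, A S -> A T -> psi (op_add S T) w = vadd (psi S w) (psi T w).
Proof. intros [_ [Hh _]] S T w HS HT. rewrite Hh; auto. Qed.
Lemma linear_on_scale psi : linear_on A psi ->
  forall a T w, A T -> psi (op_scale a T) w = vscale a (psi T w).
Proof. intros [_ [_ Hh]] a T w HT. rewrite Hh; auto. Qed.
Lemma linear_on_image psi : linear_on A psi -> forall T, A T -> is_linear (psi T).
Proof. intros Hpsi T HT. apply alg_linear, Hpsi; auto. Qed.

Variable f : X -> K.
Hypothesis Hf : bounded_functional f.
Variable z : X.
Hypothesis Hz : f z = 1.

Let fA := bf_add Hf.
Let fS := bf_scale Hf.

Section Derivation.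
Variable psi : op X -> op X.
Hypothesis Hpsi : linear_on A psi.
Hypothesis Hpsi_id : psi (op_id X) = op_zero X.
Hypothesis Hpsi_jordan : zero_jordan_preserving A psi.

Let psi_add := linear_on_add Hpsi.
Let psi_scale := linear_on_scale Hpsi.
Let psi_linear := linear_on_image Hpsi.

(* Apply the hypothesis to the orthogonal pair E, I - E. *)
Lemma psi_idempotent (E : op X) (HE : A E) (Hid : forall w, E (E w) = E w) :
  forall w, psi E w = vadd (psi E (E w)) (E (psi E w)).
Proof.
  intro w.
  set (Ec := op_add (op_id X) (op_scale (sopp K 1) E)).
  assert (HEc : A Ec) by (apply alg_add; [apply alg_id | apply alg_scale; auto]).
  assert (LE := alg_linear HE). assert (LP := psi_linear HE).
  assert (H1 : op_mul E Ec = op_zero X).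
  { extensionality u; unfold op_mul, Ec, op_add, op_scale, op_id, op_zero.
    rewrite (linear_add LE), (linear_scale LE), Hid. vring. }
  assert (H2 : op_mul Ec E = op_zero X).
  { extensionality u; unfold op_mul, Ec, op_add, op_scale, op_id, op_zero.
    rewrite Hid. vring. }
  assert (H := f_equal (fun F => F w) (Hpsi_jordan HE HEc H1 H2)). simpl in H.
  assert (Hq : forall u, psi Ec u = vscale (sopp K 1) (psi E u)).
  { intro u. unfold Ec. rewrite psi_add, psi_scale, Hpsi_id; auto.
    unfold op_zero; vring. apply alg_id. apply alg_scale; auto. }
  unfold jordan, op_add, op_mul, op_zero in H. rewrite !Hq in H.
  unfold Ec, op_add, op_scale, op_id in H.
  rewrite (linear_add LP), (linear_scale LP), (linear_scale LE) in H.
  apply (vsub_eq0 HK), (vadd_self_eq0 HK). rewrite <- H. vring.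
Qed.

Lemma psi_zero w : psi (op_zero X) w = vzero X.
Proof.
  assert (E : op_zero X = op_scale 0 (op_zero X)).
  { extensionality u; unfold op_scale, op_zero. rewrite (vscale_0l HK); auto. }
  rewrite E, psi_scale, (vscale_0l HK); auto. apply alg_zero.
Qed.

(* [psi_idempotent] for E0, E0 + E1 and E0 - E1, combined. *)
Lemma psi_idempotent_polar (E0 E1 : op X) (H0 : A E0) (H1 : A E1)
  (I0 : forall w, E0 (E0 w) = E0 w)
  (Ip : forall w, op_add E0 E1 (op_add E0 E1 w) = op_add E0 E1 w)
  (Im : forall w, op_add E0 (op_scale (sopp K 1) E1) (op_add E0 (op_scale (sopp K 1) E1) w)
                  = op_add E0 (op_scale (sopp K 1) E1) w) :
  forall w,
    vadd (psi E1 (E1 w)) (E1 (psi E1 w)) = vzero X /\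
    psi E1 w = vadd (vadd (psi E0 (E1 w)) (psi E1 (E0 w)))
                    (vadd (E0 (psi E1 w)) (E1 (psi E0 w))).
Proof.
  intro w.
  assert (Hp : A (op_add E0 E1)) by (apply alg_add; auto).
  assert (Hm : A (op_add E0 (op_scale (sopp K 1) E1)))
    by (apply alg_add; auto; apply alg_scale; auto).
  assert (R0 := psi_idempotent H0 I0 w).
  assert (Rp := psi_idempotent Hp Ip w). assert (Rm := psi_idempotent Hm Im w).
  assert (L0 := alg_linear H0). assert (L1 := alg_linear H1).
  assert (D0 := psi_linear H0). assert (D1 := psi_linear H1).
  assert (Ep : psi (op_add E0 E1) = op_add (psi E0) (psi E1)) by (apply Hpsi; auto).
  assert (Em : psi (op_add E0 (op_scale (sopp K 1) E1))
               = op_add (psi E0) (op_scale (sopp K 1) (psi E1))).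
  { pose proof Hpsi as [_ [Ha Hs]]. rewrite Ha, Hs; auto. apply alg_scale; auto. }
  rewrite Ep in Rp. rewrite Em in Rm.
  unfold op_add, op_scale in Rp, Rm.
  repeat rewrite ?(linear_add D0), ?(linear_add D1), ?(linear_scale D0), ?(linear_scale D1),
    ?(linear_add L0), ?(linear_add L1), ?(linear_scale L0), ?(linear_scale L1) in Rp.
  repeat rewrite ?(linear_add D0), ?(linear_add D1), ?(linear_scale D0), ?(linear_scale D1),
    ?(linear_add L0), ?(linear_add L1), ?(linear_scale L0), ?(linear_scale L1) in Rm.
  split.
  - apply (vadd_self_eq0 HK).
    apply (eq_by_vsub HK (c := sopp K 1)
             (f_equal2 vadd (f_equal2 vadd Rp Rm) (f_equal (vscale (sopp K (sadd K 1 1))) R0))).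
    vring.
  - apply (vsub_eq0 HK), (vadd_self_eq0 HK).
    apply (eq_by_vsub HK (c := 1) (f_equal2 vadd Rp (f_equal (vscale (sopp K 1)) Rm))). vring.
Qed.

Lemma psi_rank1_at v (Hv : f v = 1) u :
  psi (rank1 v f) u
  = vadd (vscale (f u) (psi (rank1 v f) v)) (vscale (f (psi (rank1 v f) u)) v).
Proof.
  assert (HP : A (rank1 v f)) by (apply alg_rank1; auto).
  rewrite (psi_idempotent HP (rank1_idem Hf Hv) u) at 1. unfold rank1 at 2 3.
  rewrite (linear_scale (psi_linear HP)); auto.
Qed.

Lemma f_psi_rank1_self v (Hv : f v = 1) : f (psi (rank1 v f) v) = 0.
Proof.
  assert (H := f_equal f (psi_rank1_at Hv v)). rewrite fA, !fS, Hv in H.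
  set (c := f (psi (rank1 v f) v)) in *.
  assert (E : c = sadd K (sadd K (smul K 1 c) (smul K c 1)) (sopp K c)) by ring.
  rewrite E, <- H. ring.
Qed.

Lemma psi_rank1_ker v (Hv : f v = 1) y (Hy : f y = 0) w (Hw : f w = 0) :
  psi (rank1 y f) w = vscale (f (psi (rank1 v f) w)) y.
Proof.
  destruct (classic (y = vzero X)) as [Ey|Ny].
  { subst y. rewrite rank1_0l, psi_zero, (vscale_0r HK); auto. }
  set (E0 := rank1 v f). set (E1 := rank1 y f).
  assert (H0 : A E0) by (apply alg_rank1; auto).
  assert (H1 : A E1) by (apply alg_rank1; auto).
  assert (Ep : op_add E0 E1 = rank1 (vadd v y) f).
  { extensionality u; unfold E0, E1, op_add, rank1. vring. }
  assert (Em : op_add E0 (op_scale (sopp K 1) E1) = rank1 (vadd v (vscale (sopp K 1) y)) f).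
  { extensionality u; unfold E0, E1, op_add, op_scale, rank1. vring. }
  assert (Ip : forall w, op_add E0 E1 (op_add E0 E1 w) = op_add E0 E1 w).
  { rewrite Ep. apply (rank1_idem Hf). rewrite fA, Hv, Hy; ring. }
  assert (Im : forall w, op_add E0 (op_scale (sopp K 1) E1)
                 (op_add E0 (op_scale (sopp K 1) E1) w) = op_add E0 (op_scale (sopp K 1) E1) w).
  { rewrite Em. apply (rank1_idem Hf). rewrite fA, fS, Hv, Hy; ring. }
  destruct (psi_idempotent_polar H0 H1 (rank1_idem Hf Hv) Ip Im w) as [T2 T1].
  assert (E0w : forall u, E0 u = vscale (f u) v) by reflexivity.
  assert (E1w : forall u, E1 u = vscale (f u) y) by reflexivity.
  rewrite !E0w, !E1w, Hw in T1. rewrite !E1w, Hw in T2.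
  rewrite (linear_scale (psi_linear H1)), (vscale_0l HK), vadd_0 in T2.
  rewrite (vscale_eq0 HK T2 Ny) in T1.
  rewrite (linear_scale (psi_linear H0)), (linear_scale (psi_linear H1)) in T1.
  rewrite T1. vring.
Qed.

Lemma psi_polar_rank1_left v (Hv : f v = 1) g (Hg : bounded_functional g) (Hgv : g v = 0) w :
  vadd (psi (rank1 v g) (rank1 v g w)) (rank1 v g (psi (rank1 v g) w)) = vzero X /\
  psi (rank1 v g) w
  = vadd (vadd (psi (rank1 v f) (rank1 v g w)) (psi (rank1 v g) (rank1 v f w)))
         (vadd (rank1 v f (psi (rank1 v g) w)) (rank1 v g (psi (rank1 v f) w))).
Proof.
  assert (gA := bf_add Hg). assert (gS := bf_scale Hg).
  apply psi_idempotent_polar; try (apply alg_rank1; auto); [apply (rank1_idem Hf Hv)| |];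
    intro u; unfold op_add, op_scale, rank1; repeat rewrite ?fA, ?gA, ?fS, ?gS;
    rewrite Hv, Hgv; vring.
Qed.

Lemma psi_rank1_left_parallel v (Hv : f v = 1) g (Hg : bounded_functional g) (Hgv : g v = 0) :
  exists mu, psi (rank1 v g) v = vscale mu v.
Proof.
  destruct (classic (exists w0, g w0 <> 0)) as [[w0 Hw0]|Ng].
  - destruct (psi_polar_rank1_left Hv Hg Hgv w0) as [Hsq _].
    unfold rank1 at 1 2 in Hsq.
    rewrite (linear_scale (psi_linear (alg_rank1 v Hg))) in Hsq.
    destruct (sinv_exists HK Hw0) as [b Hb].
    exists (smul K b (sopp K (g (psi (rank1 v g) w0)))).
    transitivity (vscale b (vscale (g w0) (psi (rank1 v g) v))).
    + rewrite vscale_assoc, Hb, vscale_1; auto.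
    + apply (eq_by_vsub HK (c := b) Hsq). unfold rank1. vring.
  - exists 0. replace (rank1 v g) with (op_zero X).
    + rewrite psi_zero, (vscale_0l HK); auto.
    + extensionality u. unfold rank1, op_zero.
      destruct (classic (g u = 0)) as [->|Hu]; [rewrite (vscale_0l HK); auto|].
      exfalso; eauto.
Qed.

Lemma psi_rank1_left v (Hv : f v = 1) g (Hg : bounded_functional g) (Hgv : g v = 0) :
  psi (rank1 v g) v = vscale (sopp K (g (psi (rank1 v f) v))) v.
Proof.
  destruct (psi_rank1_left_parallel Hv Hg Hgv) as [mu Hmu].
  destruct (psi_polar_rank1_left Hv Hg Hgv v) as [_ Hsum].
  assert (Pw : forall u, rank1 v f u = vscale (f u) v) by reflexivity.
  assert (Gw : forall u, rank1 v g u = vscale (g u) v) by reflexivity.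
  rewrite !Pw, !Gw, Hv, Hgv, Hmu, fS, Hv in Hsum.
  rewrite (linear_scale (psi_linear (alg_rank1 v Hf))),
    (linear_scale (psi_linear (alg_rank1 v Hg))), (vscale_0l HK), vscale_1, Hmu in Hsum.
  assert (Hmu0 : vscale (sadd K (smul K mu 1) (g (psi (rank1 v f) v))) v = vzero X).
  { apply (eq_by_vsub HK (c := sopp K 1) Hsum). vring. }
  apply (vscale_eq0 HK) in Hmu0; [|apply (bf_one_nonzero Hf Hv)].
  rewrite Hmu. f_equal.
  transitivity (sadd K (sadd K (smul K mu 1) (g (psi (rank1 v f) v)))
                       (sopp K (g (psi (rank1 v f) v)))); [ring|].
  rewrite Hmu0; ring.
Qed.

Lemma psi_corner v (Hv : f v = 1) B (HB : A B) (HBv : B v = vzero X)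
  (HfB : forall w, f (B w) = 0) :
  psi B v = vopp (B (psi (rank1 v f) v)).
Proof.
  set (P := rank1 v f).
  assert (HP : A P) by (apply alg_rank1; auto).
  assert (Pw : forall u, P u = vscale (f u) v) by reflexivity.
  assert (LB := alg_linear HB).
  assert (H1 : op_mul P B = op_zero X).
  { extensionality u; unfold op_mul, op_zero. rewrite Pw, HfB. apply (vscale_0l HK). }
  assert (H2 : op_mul B P = op_zero X).
  { extensionality u; unfold op_mul, op_zero.
    rewrite Pw, (linear_scale LB), HBv. apply (vscale_0r HK). }
  assert (H := f_equal (fun F => F v) (Hpsi_jordan HP HB H1 H2)). simpl in H.
  unfold jordan, op_add, op_mul, op_zero in H.
  rewrite HBv, (linear_zero HK (psi_linear HP)), !Pw, Hv, vscale_1 in H.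
  assert (Hf1 := f_equal f H). rewrite !fA, fS, (bf_zero Hf), HfB, Hv in Hf1.
  assert (Z : f (psi B v) = 0) by (apply (sadd_self_eq0 HK); rewrite <- Hf1; ring).
  rewrite Z in H. apply (eq_by_vsub HK (c := 1) H). vring.
Qed.

(* The Peirce decomposition of T with respect to the idempotent v ⊗ f:
   T = a (v ⊗ f) + y ⊗ f + v ⊗ g + B. *)
Lemma rank1_peirce v (Hv : f v = 1) T (HT : A T) :
  exists a y g B, f y = 0 /\ bounded_functional g /\ g v = 0 /\
    A B /\ B v = vzero X /\ (forall u, f (B u) = 0) /\
    forall u, T u = vadd (vscale (f u) (vadd (vscale a v) y)) (vadd (vscale (g u) v) (B u)).
Proof.
  assert (LT := alg_linear HT).
  set (a := f (T v)).
  set (y := vadd (T v) (vscale (sopp K a) v)).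
  set (g := fun u => f (vadd (T u) (vscale (sopp K a) u))).
  exists a, y, g.
  assert (Hg : bounded_functional g).
  { apply (bounded_functional_comp (T := op_add T (op_scale (sopp K a) (op_id X))) Hf).
    apply alg_add; auto. apply alg_scale, alg_id. }
  exists (op_add T (op_scale (sopp K 1) (op_add (rank1 (T v) f) (rank1 v g)))).
  assert (gv : g v = 0) by (unfold g; rewrite fA, fS, Hv; fold a; ring).
  split; [unfold y; rewrite fA, fS, Hv; fold a; ring|].
  split; [exact Hg|]. split; [exact gv|]. split.
  { apply alg_add; auto. apply alg_scale, alg_add;
      apply alg_rank1; auto. }
  unfold op_add, op_scale, rank1. split; [|split].
  - rewrite Hv, gv. vring.
  - intro u. unfold g. repeat rewrite ?fA, ?fS. rewrite Hv. fold a. ring.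
  - intro u. unfold y. vring.
Qed.

Lemma psi_mul_rank1_normalized v (Hv : f v = 1) T (HT : A T) w :
  psi (op_mul T (rank1 v f)) w = vadd (vscale (f w) (psi T v)) (T (psi (rank1 v f) w)).
Proof.
  destruct (rank1_peirce Hv HT) as (a & y & g & B & Hy & Hg & Hgv & HB & HBv & HfB & Tu).
  set (P := rank1 v f). set (Y := rank1 y f). set (Xg := rank1 v g).
  assert (HP : A P) by (apply alg_rank1; auto).
  assert (HY : A Y) by (apply alg_rank1; auto).
  assert (HX : A Xg) by (apply alg_rank1; auto).
  assert (LT := alg_linear HT). assert (LY := psi_linear HY).
  set (D := psi P). assert (LD : is_linear D) by (apply psi_linear; auto).
  assert (Dv0 : f (D v) = 0) by (apply f_psi_rank1_self; auto).
  assert (Tv : T v = vadd (vscale a v) y) by (rewrite Tu, Hv, Hgv, HBv; vring).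
  assert (TDv : T (D v) = vadd (vscale (g (D v)) v) (B (D v))) by (rewrite Tu, Dv0; vring).
  assert (psiTv : psi T v = vadd (vscale a (D v)) (vadd (psi Y v)
                             (vadd (vscale (sopp K (g (D v))) v) (vopp (B (D v)))))).
  { replace T with (op_add (op_scale a P) (op_add Y (op_add Xg B)))
      by (extensionality u; rewrite Tu; unfold op_add, op_scale, P, Y, Xg, rank1; vring).
    assert (HXB : A (op_add Xg B)) by (apply alg_add; auto).
    assert (HYXB : A (op_add Y (op_add Xg B))) by (apply alg_add; auto).
    assert (HaP : A (op_scale a P)) by (apply alg_scale; auto).
    rewrite psi_add, psi_scale, psi_add, psi_add by auto.
    unfold Xg. rewrite (psi_rank1_left Hv Hg Hgv), (psi_corner Hv HB HBv HfB). fold P D. vring. }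
  set (c := f (D w)).
  assert (Dw : D w = vadd (vscale (f w) (D v)) (vscale c v)) by (apply psi_rank1_at; auto).
  set (w' := vadd w (vscale (sopp K (f w)) v)).
  assert (Yw : psi Y w = vadd (vscale (f w) (psi Y v)) (vscale c y)).
  { replace w with (vadd (vscale (f w) v) w') at 1 by (unfold w'; vring).
    rewrite (linear_add LY), (linear_scale LY). unfold Y. rewrite (psi_rank1_ker Hv Hy (w := w'));
      [|unfold w'; rewrite fA, fS, Hv; ring].
    unfold w'. rewrite (linear_add LD), (linear_scale LD), fA, fS, Dv0. fold c.
    f_equal. f_equal. ring. }
  replace (op_mul T P) with (op_add (op_scale a P) Y)
    by (extensionality u; unfold op_mul, op_add, op_scale, P, Y, rank1;
        rewrite (linear_scale LT), Tv; vring).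
  rewrite psi_add, psi_scale by (try apply alg_scale; auto).
  fold D. rewrite Yw, Dw, (linear_add LT), !(linear_scale LT), TDv, Tv, psiTv.
  vring.
Qed.

(* y ⊗ f = v1 ⊗ f - s (z ⊗ f) with f v1 = f z = 1. *)
Lemma psi_mul_rank1 y T (HT : A T) w :
  psi (op_mul T (rank1 y f)) w = vadd (vscale (f w) (psi T y)) (T (psi (rank1 y f) w)).
Proof.
  set (s := sadd K 1 (sopp K (f y))).
  set (v1 := vadd y (vscale s z)).
  assert (Hv1 : f v1 = 1) by (unfold v1, s; rewrite fA, fS, Hz; ring).
  assert (LT := alg_linear HT). assert (LpT := psi_linear HT).
  assert (H1 : A (rank1 v1 f)) by (apply alg_rank1; auto).
  assert (H2 : A (rank1 z f)) by (apply alg_rank1; auto).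
  assert (H1' : A (op_mul T (rank1 v1 f))) by (apply alg_mul; auto).
  assert (H2' : A (op_mul T (rank1 z f))) by (apply alg_mul; auto).
  assert (H3 : A (op_scale (sopp K s) (op_mul T (rank1 z f)))) by (apply alg_scale; auto).
  assert (H4 : A (op_scale (sopp K s) (rank1 z f))) by (apply alg_scale; auto).
  assert (HR : rank1 y f = op_add (rank1 v1 f) (op_scale (sopp K s) (rank1 z f))).
  { extensionality u. unfold op_add, op_scale, rank1, v1. vring. }
  assert (HTR : op_mul T (rank1 y f) =
                op_add (op_mul T (rank1 v1 f)) (op_scale (sopp K s) (op_mul T (rank1 z f)))).
  { rewrite HR. extensionality u. unfold op_mul, op_add, op_scale.
    rewrite (linear_add LT), (linear_scale LT); auto. }
  replace y with (vadd v1 (vscale (sopp K s) z)) at 2 by (unfold v1; vring).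
  rewrite HTR, HR, !psi_add, !psi_scale, !psi_mul_rank1_normalized by auto.
  rewrite (linear_add LpT), (linear_scale LpT), (linear_add LT), (linear_scale LT). vring.
Qed.

Lemma psi_mul S T (HS : A S) (HT : A T) :
  psi (op_mul S T) = op_add (op_mul (psi S) T) (op_mul S (psi T)).
Proof.
  extensionality y. unfold op_add, op_mul at 2 3.
  assert (LS := alg_linear HS). assert (LT := alg_linear HT).
  assert (EST := psi_mul_rank1 y (alg_mul HS HT) z).
  assert (ES := psi_mul_rank1 (T y) HS z).
  assert (ET := psi_mul_rank1 y HT z).
  assert (Hrank : op_mul T (rank1 y f) = rank1 (T y) f).
  { extensionality u. unfold op_mul, rank1. rewrite (linear_scale LT); auto. }
  replace (op_mul (op_mul S T) (rank1 y f)) with (op_mul S (rank1 (T y) f)) in EST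
    by (rewrite <- Hrank; auto).
  rewrite Hrank in ET. rewrite ET in ES. rewrite ES, Hz in EST.
  unfold op_mul at 2 in EST. rewrite (linear_add LS), !vscale_1 in EST.
  symmetry in EST. apply (eq_by_vsub HK (c := 1) EST). vring.
Qed.

Lemma psi_derivation : derivation_on A psi.
Proof. split; auto. intros; apply psi_mul; auto. Qed.

End Derivation.

Section Decomposition.
Variable phi : op X -> op X.
Hypothesis Hphi : linear_on A phi.
Hypothesis Hphi_jordan : zero_jordan_preserving A phi.

Let phi_add := linear_on_add Hphi.
Let phi_scale := linear_on_scale Hphi.

Let C := phi (op_id X).
Let LC : is_linear C := alg_linear (proj1 Hphi _ alg_id).

(* Apply the hypothesis to the orthogonal pair P = v ⊗ f, I - P. *)
Lemma phi_id_rank1 v (Hv : f v = 1) :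
  C v = vscale (f (C v)) v /\ forall w, f w = 0 -> f (C w) = 0.
Proof.
  set (P := rank1 v f).
  assert (HP : A P) by (apply alg_rank1; auto).
  assert (Pw : forall u, P u = vscale (f u) v) by reflexivity.
  set (Q := op_add (op_id X) (op_scale (sopp K 1) P)).
  assert (HQ : A Q) by (apply alg_add; [apply alg_id | apply alg_scale; auto]).
  assert (Qw : forall u, Q u = vadd u (vscale (sopp K 1) (vscale (f u) v))) by reflexivity.
  assert (LD := linear_on_image Hphi HP).
  assert (H1 : op_mul P Q = op_zero X).
  { extensionality u; unfold op_mul, op_zero. rewrite Pw, Qw.
    repeat rewrite ?fA, ?fS. rewrite Hv. rewrite <- (vscale_0l HK v). f_equal; ring. }
  assert (H2 : op_mul Q P = op_zero X).
  { extensionality u; unfold op_mul, op_zero. rewrite Pw, Qw.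
    repeat rewrite ?fA, ?fS. rewrite Hv. vring. }
  assert (EQ : forall u, phi Q u = vadd (C u) (vscale (sopp K 1) (phi P u))).
  { intro u. unfold Q. rewrite phi_add, phi_scale; auto. apply alg_id.
    apply alg_scale; auto. }
  assert (Hw : forall w,
    vadd (vadd (vadd (phi P w) (vscale (sopp K 1) (vscale (f w) (phi P v))))
               (vadd (phi P w) (vscale (sopp K 1) (vscale (f (phi P w)) v))))
         (vadd (vscale (sadd K (f (C w)) (smul K (sopp K 1) (f (phi P w)))) v)
               (vscale (f w) (vadd (C v) (vscale (sopp K 1) (phi P v))))) = vzero X).
  { intro w.
    assert (Hjw : vadd (vadd (phi P (Q w)) (Q (phi P w))) (vadd (P (phi Q w)) (phi Q (P w)))
                  = vzero X) by exact (f_equal (fun F => F w) (Hphi_jordan HP HQ H1 H2)).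
    rewrite <- Hjw, !EQ, !Qw, !Pw.
    repeat rewrite ?(linear_add LD), ?(linear_scale LD), ?(linear_add LC), ?(linear_scale LC).
    repeat rewrite ?fA, ?fS. vring. }
  split.
  - assert (H := Hw v). rewrite Hv in H.
    assert (Ecv : C v = vscale (sadd K (sadd K (f (phi P v)) (f (phi P v))) (sopp K (f (C v)))) v).
    { apply (eq_by_vsub HK (c := 1) H). vring. }
    assert (G2 := f_equal f Ecv). rewrite fS, Hv in G2.
    rewrite Ecv at 1. f_equal. symmetry. etransitivity; [exact G2|]. ring.
  - intros w Hw0. assert (H := f_equal f (Hw w)).
    repeat rewrite ?fA, ?fS in H. rewrite (bf_zero Hf), Hv, Hw0 in H.
    ring_simplify in H. exact H.
Qed.

Let lam := f (C z).

Lemma phi_id_scalar x : C x = vscale lam x.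
Proof.
  destruct (phi_id_rank1 Hz) as [Cz Nz].
  set (u := vadd x (vscale (sopp K (f x)) z)).
  assert (Hu : f u = 0) by (unfold u; rewrite fA, fS, Hz; ring).
  set (v := vadd u z).
  assert (Hv : f v = 1) by (unfold v; rewrite fA, Hu, Hz; ring).
  destruct (phi_id_rank1 Hv) as [Cv _].
  assert (Fv : f (C v) = lam).
  { unfold v. rewrite (linear_add LC), fA, (Nz u Hu). unfold lam. ring. }
  rewrite Fv in Cv. fold lam in Cz.
  replace x with (vadd v (vscale (sadd K (f x) (sopp K 1)) z)) at 1 by (unfold v, u; vring).
  rewrite (linear_add LC), (linear_scale LC), Cv, Cz. unfold v, u. vring.
Qed.

Definition phi_inner (T : op X) : op X := op_add (phi T) (op_scale (sopp K lam) T).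

Lemma phi_inner_linear : linear_on A phi_inner.
Proof.
  split; [|split].
  - intros T HT. unfold phi_inner. apply alg_add. apply Hphi; auto. apply alg_scale; auto.
  - intros S T HS HT. unfold phi_inner. extensionality w. unfold op_add at 1 3 4 5 6.
    rewrite phi_add; auto. unfold op_scale, op_add. vring.
  - intros a T HT. unfold phi_inner. extensionality w. unfold op_add.
    rewrite phi_scale; auto. unfold op_scale. vring.
Qed.

Lemma phi_inner_id : phi_inner (op_id X) = op_zero X.
Proof.
  extensionality w. unfold phi_inner, op_add, op_scale, op_zero. fold C. rewrite phi_id_scalar.
  unfold op_id. vring.
Qed.

Lemma phi_inner_jordan : zero_jordan_preserving A phi_inner.
Proof.
  intros S T HS HT H1 H2. extensionality w.
  assert (E0 := f_equal (fun F => F w) (Hphi_jordan HS HT H1 H2)). simpl in E0.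
  assert (h1 : forall u, S (T u) = vzero X) by (intro u; exact (f_equal (fun F => F u) H1)).
  assert (h2 : forall u, T (S u) = vzero X) by (intro u; exact (f_equal (fun F => F u) H2)).
  assert (LS := alg_linear HS). assert (LT := alg_linear HT).
  unfold jordan, phi_inner, op_add, op_mul, op_scale, op_zero in *.
  rewrite (linear_add LS), (linear_add LT), (linear_scale LS), (linear_scale LT), !h1, !h2.
  apply (eq_by_vsub HK (c := 1) E0). vring.
Qed.

Theorem derivation_plus_multiplier :
  (exists delta eta : op X -> op X,
     derivation_on A delta /\ multiplier_on A eta /\
     forall T, A T -> phi T = op_add (delta T) (eta T)) /\
  (phi (op_id X) = op_zero X -> derivation_on A phi).
Proof.
  assert (Dinner : derivation_on A phi_inner)
    by exact (psi_derivation phi_inner_linear phi_inner_id phi_inner_jordan).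
  split.
  - exists phi_inner, (fun T => op_scale lam T). split; [auto|split].
    + split; [split; [|split]|].
      * intros T HT; apply alg_scale; auto.
      * intros S T HS HT. extensionality w. unfold op_scale, op_add. vring.
      * intros a T HT. extensionality w. unfold op_scale. vring.
      * intros T HT. split; [reflexivity|]. extensionality w. unfold op_mul, op_scale, op_id.
        rewrite (linear_scale (alg_linear HT)); auto.
    + intros T HT. extensionality w. unfold phi_inner, op_add, op_scale. vring.
  - intro H0. assert (Hl : lam = 0).
    { unfold lam, C. rewrite H0. unfold op_zero. apply (bf_zero Hf). }
    replace phi with phi_inner; auto.
    extensionality T. extensionality w. unfold phi_inner, op_add, op_scale. rewrite Hl. vring.
Qed.

End Decomposition.

End StandardAlgebra.

(* Scalars of a real space appear as real-number expressions; [vring] needs them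
   written with the operations of [RField]. *)
Ltac to_RField t := match t with
 | Rplus ?a ?b => let a' := to_RField a in let b' := to_RField b in constr:(sadd RField a' b')
 | Rmult ?a ?b => let a' := to_RField a in let b' := to_RField b in constr:(smul RField a' b')
 | Ropp ?a => let a' := to_RField a in constr:(sopp RField a')
 | Rminus ?a ?b => let a' := to_RField a in let b' := to_RField b in
                   constr:(sadd RField a' (sopp RField b'))
 | IZR (Zneg ?p) => constr:(sopp RField (IZR (Zpos p)))
 | _ => t end.
Ltac vringR := repeat match goal with |- context [@vscale RField ?X ?a ?x] =>
   let a' := to_RField a in progress change a with a' end; vring.

Section HahnBanach.
Variable X : BanachSpace RField.
Add Ring Dring : (@dual_ring RField field_laws_R X).
Local Notation "a ** x" := (@vscale RField X a x) (at level 40).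

Variable z : X.
Hypothesis Hz : z <> vzero X.

Lemma vnorm_scaleR (a : R) (x : X) : vnorm (a ** x) = Rabs a * vnorm x.
Proof. apply (vnorm_scale X). Qed.

(* Graphs of norm-dominated linear functionals on subspaces, normalized at z. *)
Record norming_graph (G : X -> R -> Prop) : Prop := {
  ng_fun : forall x r s, G x r -> G x s -> r = s;
  ng_add : forall x y r s, G x r -> G y s -> G (vadd x y) (r + s);
  ng_scale : forall a x r, G x r -> G (a ** x) (a * r);
  ng_dom : forall x r, G x r -> r <= vnorm x;
  ng_z : G z (vnorm z) }.

Lemma ng_zero G : norming_graph G -> G (vzero X) 0.
Proof.
  intro H. assert (E := ng_scale H 0 (ng_z H)).
  rewrite Rmult_0_l, (vscale_0l field_laws_R) in E. exact E.
Qed.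

Definition line_graph (x : X) (r : R) : Prop := exists a, x = a ** z /\ r = a * vnorm z.

Lemma line_graph_norming : norming_graph line_graph.
Proof.
  assert (Pz : 0 < vnorm z).
  { destruct (vnorm_ge0 field_laws_R z) as [|E]; auto.
    exfalso; apply Hz. apply vnorm_eq0; auto. }
  constructor.
  - intros x r s [a [-> ->]] [b [E ->]].
    assert (E2 : (a + - b) ** z = vzero X).
    { transitivity (vadd (a ** z) (vopp (b ** z))); [vringR|]. rewrite E; apply vadd_opp. }
    assert (E3 := f_equal vnorm E2).
    rewrite vnorm_scaleR, (proj2 (vnorm_eq0 X _) eq_refl) in E3.
    assert (Rabs (a + - b) = 0) by (apply Rmult_eq_reg_r with (vnorm z); lra).
    assert (a = b) by (destruct (Rcase_abs (a + - b));
                       [rewrite Rabs_left in *|rewrite Rabs_right in *]; lra).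
    subst; auto.
  - intros x y r s [a [-> ->]] [b [-> ->]]. exists (a + b). split; [|ring].
    rewrite (vscale_adds X). auto.
  - intros c x r [a [-> ->]]. exists (c * a). split; [|ring]. rewrite vscale_assoc; auto.
  - intros x r [a [-> ->]]. rewrite vnorm_scaleR.
    apply Rmult_le_compat_r; [lra|apply Rle_abs].
  - exists 1. split; [rewrite vscale_1; auto | ring].
Qed.

Section Extension.
Variable G : X -> R -> Prop.
Hypothesis HG : norming_graph G.
Variable y : X.

Lemma norming_graph_gap x0 r0 x1 r1 : G x0 r0 -> G x1 r1 ->
  r0 - vnorm (vadd x0 (vopp y)) <= vnorm (vadd x1 y) - r1.
Proof.
  intros H0 H1. assert (Hd := ng_dom HG (ng_add HG H0 H1)).
  replace (vadd x0 x1) with (vadd (vadd x0 (vopp y)) (vadd x1 y)) in Hd by vring.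
  assert (T := vnorm_triangle X (vadd x0 (vopp y)) (vadd x1 y)). lra.
Qed.

Lemma extension_value : exists c,
  (forall x0 r0, G x0 r0 -> r0 - vnorm (vadd x0 (vopp y)) <= c) /\
  (forall x1 r1, G x1 r1 -> c <= vnorm (vadd x1 y) - r1).
Proof.
  set (S := fun q => exists x0 r0, G x0 r0 /\ q = r0 - vnorm (vadd x0 (vopp y))).
  assert (G00 := ng_zero HG).
  assert (Sb : bound S).
  { exists (vnorm (vadd (vzero X) y) - 0). intros q [x0 [r0 [H ->]]].
    apply (norming_graph_gap H G00). }
  assert (Sne : exists q, S q)
    by (exists (0 - vnorm (vadd (vzero X) (vopp y))); exists (vzero X), 0; auto).
  destruct (completeness S Sb Sne) as [c [Hub Hlub]].
  exists c. split.
  - intros x0 r0 H. apply Hub. exists x0, r0; auto.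
  - intros x1 r1 H. apply Hlub. intros q [x0 [r0 [H0 ->]]]. apply (norming_graph_gap H0 H).
Qed.

Variable c : R.
Hypothesis Hlow : forall x0 r0, G x0 r0 -> r0 - vnorm (vadd x0 (vopp y)) <= c.
Hypothesis Hup : forall x1 r1, G x1 r1 -> c <= vnorm (vadd x1 y) - r1.

Definition graph_extension (x : X) (r : R) : Prop :=
  exists x0 r0 a, G x0 r0 /\ x = vadd x0 (a ** y) /\ r = r0 + a * c.

Lemma graph_extension_fun (Hy : forall r, ~ G y r) x r s :
  graph_extension x r -> graph_extension x s -> r = s.
Proof.
  intros [x0 [r0 [a [H0 [-> ->]]]]] [x1 [r1 [b [H1 [E ->]]]]].
  destruct (Req_dec a b) as [<-|Nab].
  - assert (x0 = x1).
    { apply (vadd_reg_l (a := a ** y)). rewrite !(vadd_comm X (a ** y)). auto. }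
    subst x1. rewrite (ng_fun HG H0 H1). auto.
  - exfalso. apply (Hy ((/ (a + - b)) * (r1 + -1 * r0))).
    assert (Ey : (a + - b) ** y = vadd x1 ((-1) ** x0)).
    { rewrite (vscale_adds X). apply (eq_by_vsub field_laws_R (c := 1) E). vringR. }
    assert (G2 := ng_scale HG (/ (a + - b)) (ng_add HG H1 (ng_scale HG (-1) H0))).
    rewrite <- Ey, vscale_assoc in G2.
    replace (smul RField (/ (a + - b)) (a + - b)) with (sone RField) in G2
      by (simpl; field; lra).
    rewrite vscale_1 in G2. exact G2.
Qed.

(* For a < 0 divide by -a and use [Hlow]; for a > 0 divide by a and use [Hup]. *)
Lemma graph_extension_dom x r : graph_extension x r -> r <= vnorm x.
Proof.
  intros [x0 [r0 [a [H0 [-> ->]]]]].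
  destruct (Rtotal_order a 0) as [Hn|[Ha0|Hp]].
  - set (k := / - a).
    assert (hk : - a * k = 1) by (unfold k; field; lra).
    assert (C1 := Hlow (ng_scale HG k H0)).
    replace (vadd x0 (a ** y)) with ((- a) ** (vadd (k ** x0) (vopp y))).
    + rewrite vnorm_scaleR, Rabs_pos_eq by lra.
      assert (h : - a * (k * r0 - vnorm (vadd (k ** x0) (vopp y))) <= - a * c)
        by (apply Rmult_le_compat_l; lra).
      rewrite Rmult_minus_distr_l, <- Rmult_assoc, hk in h. lra.
    + rewrite (vscale_addv X), vscale_assoc.
      replace (smul RField (- a) k) with (sone RField) by (simpl; rewrite hk; auto).
      rewrite vscale_1. vringR.
  - subst a. rewrite (vscale_0l field_laws_R), vadd_0r. assert (h := ng_dom HG H0). lra.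
  - set (k := / a).
    assert (hk : a * k = 1) by (unfold k; field; lra).
    assert (C1 := Hup (ng_scale HG k H0)).
    replace (vadd x0 (a ** y)) with (a ** (vadd (k ** x0) y)).
    + rewrite vnorm_scaleR, Rabs_pos_eq by lra.
      assert (h : a * c <= a * (vnorm (vadd (k ** x0) y) - k * r0))
        by (apply Rmult_le_compat_l; lra).
      rewrite Rmult_minus_distr_l, <- Rmult_assoc, hk in h. lra.
    + rewrite (vscale_addv X), vscale_assoc.
      replace (smul RField a k) with (sone RField) by (simpl; rewrite hk; auto).
      rewrite vscale_1. auto.
Qed.

Lemma graph_extension_norming (Hy : forall r, ~ G y r) : norming_graph graph_extension.
Proof.
  constructor.
  - exact (graph_extension_fun Hy).
  - intros x x' r s [x0 [r0 [a [H0 [-> ->]]]]] [x1 [r1 [b [H1 [-> ->]]]]].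
    exists (vadd x0 x1), (r0 + r1), (a + b).
    split; [apply (ng_add HG); auto|split; [vringR|ring]].
  - intros k x r [x0 [r0 [a [H0 [-> ->]]]]].
    exists (k ** x0), (k * r0), (k * a).
    split; [apply (ng_scale HG); auto|split; [vringR|ring]].
  - exact graph_extension_dom.
  - exists z, (vnorm z), 0. split; [apply (ng_z HG)|split; [vringR|ring]].
Qed.

End Extension.

Lemma norming_graph_extend G (HG : norming_graph G) y (Hy : forall r, ~ G y r) :
  exists G', norming_graph G' /\ (forall x r, G x r -> G' x r) /\ exists r, G' y r.
Proof.
  destruct (extension_value HG y) as [c [Hlow Hup]].
  exists (graph_extension G y c). split; [|split].
  - exact (graph_extension_norming HG Hlow Hup Hy).
  - intros x r H. exists x, r, 0. split; auto. split; [vringR|ring].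
  - exists c, (vzero X), 0, 1. split; [apply (ng_zero HG)|]. split; [vringR|ring].
Qed.

Definition graph_le (s t : {G | norming_graph G}) : bool :=
  boolp.asbool (forall x r, proj1_sig s x r -> proj1_sig t x r).

Lemma graph_le_spec s t :
  graph_le s t = true <-> forall x r, proj1_sig s x r -> proj1_sig t x r.
Proof.
  unfold graph_le. destruct (boolp.asboolP (forall x r, proj1_sig s x r -> proj1_sig t x r));
    split; auto; discriminate.
Qed.

Lemma norming_graph_chain_ub (C : {G | norming_graph G} -> Prop)
  (Hchain : forall s t, C s -> C t -> graph_le s t = true \/ graph_le t s = true) :
  exists u, forall s, C s -> graph_le s u = true.
Proof.
  destruct (classic (exists s, C s)) as [[s0 Hs0]|Hempty].
  2: { exists (exist _ _ line_graph_norming). intros s Hs. exfalso; eauto. }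
  set (U := fun x r => exists s, C s /\ proj1_sig s x r).
  assert (Hc : forall s t, C s -> C t ->
     (forall x r, proj1_sig s x r -> proj1_sig t x r) \/
     (forall x r, proj1_sig t x r -> proj1_sig s x r)).
  { intros s t Hs Ht. rewrite <- !graph_le_spec. auto. }
  assert (HU : norming_graph U).
  { constructor.
    - intros x r q [s [Hs Hr]] [t [Ht Hq]].
      destruct (Hc s t Hs Ht) as [E|E].
      + apply (ng_fun (proj2_sig t) (x := x)); auto.
      + apply (ng_fun (proj2_sig s) (x := x)); auto.
    - intros x y r q [s [Hs Hr]] [t [Ht Hq]].
      destruct (Hc s t Hs Ht) as [E|E].
      + exists t; split; auto. apply (ng_add (proj2_sig t)); auto.
      + exists s; split; auto. apply (ng_add (proj2_sig s)); auto.
    - intros a x r [s [Hs Hr]]. exists s; split; auto. apply (ng_scale (proj2_sig s)); auto.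
    - intros x r [s [Hs Hr]]. apply (ng_dom (proj2_sig s) Hr).
    - exists s0; split; auto. apply (ng_z (proj2_sig s0)). }
  exists (exist _ U HU). intros s Hs. apply graph_le_spec. intros x r H. exists s; auto.
Qed.

Lemma maximal_norming_graph : exists G, norming_graph G /\
  forall G', norming_graph G' -> (forall x r, G x r -> G' x r) -> forall x r, G' x r -> G x r.
Proof.
  destruct (@classical_sets.ZL_preorder _ (exist _ _ line_graph_norming) graph_le)
    as [[G HG] Hmax].
  - intro t. apply graph_le_spec. auto.
  - intros r s t H1 H2. apply graph_le_spec. intros x q H.
    apply (proj1 (graph_le_spec s t) H2), (proj1 (graph_le_spec r s) H1), H.
  - exact norming_graph_chain_ub.
  - exists G. split; auto. intros G' HG' Hsub.
    apply (graph_le_spec (exist _ G' HG') (exist _ G HG)), Hmax, graph_le_spec. auto.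
Qed.

Theorem hahn_banach_real : exists u : X -> R,
  (forall x y, u (vadd x y) = u x + u y) /\
  (forall (a : RField) x, u (vscale a x) = a * u x) /\
  (forall x, u x <= vnorm x) /\ u z = vnorm z.
Proof.
  destruct maximal_norming_graph as [G [HG Hmax]].
  assert (Dom : forall x, exists r, G x r).
  { intro y. apply NNPP. intro H.
    assert (Hy : forall r, ~ G y r) by (intros r Hr; apply H; eauto).
    destruct (norming_graph_extend HG Hy) as [G' [HG' [Hsub [r Hr]]]].
    exact (Hy r (Hmax G' HG' Hsub y r Hr)). }
  destruct (choice _ Dom) as [u Hu].
  exists u. split; [|split; [|split]].
  - intros x y. apply (ng_fun HG (Hu (vadd x y))), (ng_add HG); auto.
  - intros a x. apply (ng_fun HG (Hu (vscale a x))), (ng_scale HG); auto.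
  - intro x. apply (ng_dom HG); auto.
  - apply (ng_fun HG (Hu z)), (ng_z HG).
Qed.

End HahnBanach.

Section RealRestriction.
Variable X : BanachSpace CField.

Definition real_scale (a : R) (x : X) : X := vscale ((a, 0) : sc CField) x.

Definition real_restriction : BanachSpace RField.
Proof.
  refine (@Build_BanachSpace RField (vec X) (vzero X) (@vadd _ X) (@vopp _ X) real_scale
            (@vnorm _ X) _ _ _ _ _ _ _ _ _ _ _ _); unfold real_scale.
  - apply vadd_assoc.
  - apply vadd_comm.
  - apply vadd_0.
  - apply vadd_opp.
  - apply (vscale_1 X).
  - intros a b x. rewrite vscale_assoc. f_equal. simpl. unfold Cmul; simpl.
    apply (f_equal2 pair); ring.
  - intros a x y. apply vscale_addv.
  - intros a b x. rewrite <- vscale_adds. f_equal. simpl. unfold Cadd; simpl.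
    apply (f_equal2 pair); ring.
  - apply vnorm_eq0.
  - apply vnorm_triangle.
  - intros a x. rewrite vnorm_scale. f_equal. simpl. unfold Cabs; simpl.
    replace (a * a + 0 * 0) with (Rsqr a) by (unfold Rsqr; ring). apply sqrt_Rsqr_abs.
  - apply vcomplete.
Defined.

End RealRestriction.

Lemma hahn_banach_abs (X : BanachSpace RField) (z : X) (Hz : z <> vzero X) :
  exists u : X -> R,
  (forall x y, u (vadd x y) = u x + u y) /\
  (forall (a : RField) x, u (vscale a x) = a * u x) /\
  (forall x, Rabs (u x) <= vnorm x) /\ u z = vnorm z.
Proof.
  destruct (hahn_banach_real Hz) as [u [Hadd [Hscale [Hdom Hz']]]].
  exists u; repeat split; auto.
  intro x. assert (E := Hdom (@vscale RField X (-1) x)).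
  rewrite Hscale, (vnorm_scale X) in E. simpl in E.
  replace (Rabs (-1)) with 1 in E by (symmetry; rewrite Rabs_left; lra). assert (F := Hdom x). apply Rabs_le. lra.
Qed.

Lemma Cabs_le (p q : R) : Cabs (p, q) <= Rabs p + Rabs q.
Proof.
  unfold Cabs; simpl.
  assert (0 <= Rabs p) by apply Rabs_pos. assert (0 <= Rabs q) by apply Rabs_pos.
  rewrite <- (sqrt_Rsqr (Rabs p + Rabs q)) by lra.
  apply sqrt_le_1_alt. unfold Rsqr.
  assert (p * p = Rabs p * Rabs p) by (rewrite <- Rabs_mult, Rabs_pos_eq; nra).
  assert (q * q = Rabs q * Rabs q) by (rewrite <- Rabs_mult, Rabs_pos_eq; nra).
  nra.
Qed.

(* The complex functional whose real part is u: f x = u x - i u (i x). *)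
Lemma complexify_functional (X : BanachSpace CField) (u : X -> R)
  (Hadd : forall x y, u (vadd x y) = u x + u y)
  (Hscale : forall (a : R) x, u (vscale ((a, 0) : sc CField) x) = a * u x)
  (Hdom : forall x, Rabs (u x) <= vnorm x) :
  bounded_functional (fun x : X => ((u x, - u (vscale ((0, 1) : sc CField) x)) : sc CField)).
Proof.
  set (i := ((0, 1) : sc CField)).
  assert (Hsplit : forall a1 a2 (x : X), vscale ((a1, a2) : sc CField) x =
      vadd (vscale ((a1, 0) : sc CField) x) (vscale ((a2, 0) : sc CField) (vscale i x))).
  { intros a1 a2 x. unfold i. rewrite vscale_assoc, <- vscale_adds. f_equal. simpl.
    unfold Cadd, Cmul; simpl. apply (f_equal2 pair); ring. }
  assert (Hii : forall x : X, vscale i (vscale i x) = vscale ((-1, 0) : sc CField) x).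
  { intro x. unfold i. rewrite vscale_assoc. f_equal. simpl. unfold Cmul; simpl.
    apply (f_equal2 pair); ring. }
  assert (Hic : forall (a : R) (x : X), vscale i (vscale ((a, 0) : sc CField) x) =
                                        vscale ((a, 0) : sc CField) (vscale i x)).
  { intros a x. unfold i. rewrite !vscale_assoc. f_equal. simpl. unfold Cmul; simpl.
    apply (f_equal2 pair); ring. }
  split; [|split].
  - intros x y. rewrite vscale_addv, !Hadd. simpl. unfold Cadd; simpl.
    apply (f_equal2 pair); ring.
  - intros [a1 a2] x. rewrite Hsplit, vscale_addv, !Hic, Hii, !Hadd, !Hscale. simpl.
    unfold Cmul; simpl. apply (f_equal2 pair); ring.
  - exists 2. intro x. simpl.
    apply Rle_trans with (Rabs (u x) + Rabs (- u (vscale i x))); [apply Cabs_le|].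
    rewrite Rabs_Ropp.
    assert (E1 := Hdom x). assert (E2 := Hdom (vscale i x)).
    rewrite vnorm_scale in E2.
    replace (sabs CField i) with 1 in E2; [lra|].
    unfold i. simpl. unfold Cabs; simpl. replace (0 * 0 + 1 * 1) with 1 by ring.
    symmetry; apply sqrt_1.
Qed.

Lemma exists_nonvanishing_functional (K : ScalarField) (HK : K = RField \/ K = CField)
  (X : BanachSpace K) (z : X) (Hz : z <> vzero X) :
  exists f, bounded_functional f /\ f z <> szero K.
Proof.
  destruct HK; subst K.
  - destruct (hahn_banach_abs Hz) as [u [Hadd [Hscale [Hdom Hz']]]].
    exists u. split; [split; [|split]|]; auto.
    + exists 1. intro x. simpl. rewrite Rmult_1_l. auto.
    + simpl. rewrite Hz'. intro E. apply Hz, vnorm_eq0; auto.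
  - destruct (hahn_banach_abs (X := real_restriction X) Hz) as [u [Hadd [Hscale [Hdom Hz']]]].
    eexists; split; [exact (complexify_functional Hadd Hscale Hdom)|].
    simpl. intro E. inversion E as [[Hu0]]. apply Hz, vnorm_eq0. simpl in Hz'. lra.
Qed.

Lemma exists_functional_one (K : ScalarField) (HK : K = RField \/ K = CField)
  (X : BanachSpace K) (z0 : X) (Hz0 : z0 <> vzero X) :
  exists (f : X -> K) (z : X), bounded_functional f /\ f z = sone K.
Proof.
  destruct (exists_nonvanishing_functional HK Hz0) as [f [Hf Hfz]].
  destruct (sinv_exists (field_laws_RC HK) Hfz) as [b Hb].
  exists f, (vscale b z0). split; auto. rewrite (bf_scale Hf). exact Hb.
Qed.

Lemma op_eq_trivial_space (K : ScalarField) (X : BanachSpace K) :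
  (forall x : X, x = vzero X) -> forall S T : op X, S = T.
Proof. intros H S T. extensionality x. rewrite (H (S x)), (H (T x)). auto. Qed.

Theorem corollary2p10 (K : ScalarField) (HK : K = RField \/ K = CField)
  (X : BanachSpace K) (A : op X -> Prop) (HA : unital_standard_algebra A)
  (phi : op X -> op X) (Hphi : linear_on A phi)
  (Hzp : forall S T, A S -> A T ->
     op_mul S T = op_zero X -> op_mul T S = op_zero X ->
     op_add (jordan (phi S) T) (jordan S (phi T)) = op_zero X) :
  (exists delta eta : op X -> op X,
     derivation_on A delta /\ multiplier_on A eta /\
     forall T, A T -> phi T = op_add (delta T) (eta T)) /\
  (phi (op_id X) = op_zero X -> derivation_on A phi).
Proof.
  destruct (classic (exists z0 : X, z0 <> vzero X)) as [[z0 Hz0]|Htriv].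
  - destruct (exists_functional_one HK Hz0) as (f & z & Hf & Hz).
    exact (derivation_plus_multiplier (field_laws_RC HK) HA Hf Hz Hphi Hzp).
  - assert (Heq : forall S T : op X, S = T).
    { apply op_eq_trivial_space. intro x. apply NNPP. eauto. }
    split.
    + exists (fun _ => op_zero X), phi. split; [|split].
      * split; [split; [intros T _; apply (alg_zero HA)|split]|]; intros; apply Heq.
      * split; [exact Hphi|]. intros; split; apply Heq.
      * intros; apply Heq.
    + intros _. split; [exact Hphi|]. intros; apply Heq.
Qed.
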